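(* Let $\mathcal{G}=(G,o,R_1,\ldots,R_n)$ be a functional Menger system of rank $n$ and let $H$ be a nonempty subset of $G$. Then $H$ is a stabilizer of $\mathcal{G}$ if and only if $H$ is a quasi-stable, $l$-unitary normal $v$-complex and there exists a subset $U\subseteq G$ with $H\subseteq U$ such that $R_iU\subseteq H$ and $R_i(G\setminus U)\subseteq G\setminus U$ for every $i\in\{1,\ldots,n\}$, and such that for all $x,y\in G$, all $t\in T_n(G)$, all $i\in\{1,\ldots,n\}$, all $u\in G$ and all $\bar w=(w_1,\ldots,w_n)\in G^n$: (1) if $x\in H$, $y\in H$ and $t(x)\in U$, then $t(y)\in U$; (2) if $x=y[R_1x\ldots R_nx]\in U$ and $u[\bar w\,|_i y]\in H$, then $u[\bar w\,|_i x]\in H$; (3) if $x=y[R_1x\ldots R_nx]\in U$ and $u[\bar w\,|_i y]\in U$, then $u[\bar w\,|_i x]\in U$; where in (2) and (3) the prefix $u[\bar w\,|_i\ ]$ is also allowed to be empty, i.e. (2) and (3) are also required with $u[\bar w\,|_i y]$ replaced by $y$ and $u[\bar w\,|_i x]$ replaced by $x$.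
   Context: A functional Menger system of rank $n$ is a nonempty set $G$ with an $(n+1)$-ary operation $o\colon(x_0,x_1,\ldots,x_n)\mapsto x_0[x_1\ldots x_n]$ and unary operations $R_1,\ldots,R_n$ satisfying, for all $i,k\in\{1,\ldots,n\}$ and all elements: (A1) $x[y_1\ldots y_n][z_1\ldots z_n]=x[y_1[z_1\ldots z_n]\ldots y_n[z_1\ldots z_n]]$; (A2) $x[R_1x\ldots R_nx]=x$; (A3) $x[\bar u\,|_iz][R_1y\ldots R_ny]=x[\bar u\,|_iz[R_1y\ldots R_ny]]$; (A4) $R_ix[R_1y\ldots R_ny]=(R_ix)[R_1y\ldots R_ny]$; (A5) $x[R_1y\ldots R_ny][R_1z\ldots R_nz]=x[R_1z\ldots R_nz][R_1y\ldots R_ny]$; (A6) $R_ix[y_1\ldots y_n]=R_i(R_kx)[y_1\ldots y_n]$; (A7) $(R_ix)[y_1\ldots y_n]=y_i[R_1(x[y_1\ldots y_n])\ldots R_n(x[y_1\ldots y_n])]$. Here $x[\bar u\,|_iz]$ denotes $x[u_1\ldots u_{i-1}\,z\,u_{i+1}\ldots u_n]$ for $\bar u=(u_1,\ldots,u_n)$, and $R_ix[\ldots]$ means $R_i(x[\ldots])$. For a set $A$, $\mathcal F(A^n,A)$ is the set of partial maps $A^n\to A$. For $f,g_1,\ldots,g_n\in\mathcal F(A^n,A)$, the Menger composition $f[g_1\ldots g_n]$ is the partial function $\bar a\mapsto f(g_1(\bar a),\ldots,g_n(\bar a))$ (defined exactly when the right side is defined), and $\mathcal R_if$ is the partial function with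 domain equal to the domain of $f$ given by $(a_1,\ldots,a_n)\mapsto a_i$. A representation of $\mathcal G$ by $n$-place functions on a set $A$ is a map $P\colon G\to\mathcal F(A^n,A)$ with $P(x[y_1\ldots y_n])=P(x)[P(y_1)\ldots P(y_n)]$ and $P(R_ix)=\mathcal R_iP(x)$ for all $x,y_j$ and $i$. A nonempty subset $H\subseteq G$ is a stabilizer of $\mathcal G$ if there exist a representation $P$ of $\mathcal G$ by $n$-place functions on some set $A$ and a point $a\in A$ such that $H=\{g\in G : P(g)(a,\ldots,a)=a\}$. $T_n(G)$ is the smallest set of maps $G\to G$ (written $x\mapsto t(x)$) containing the identity map $x\mapsto x$ and such that whenever $t\in T_n(G)$, then also $x\mapsto a[\bar b\,|_it(x)]$ and $x\mapsto R_it(x)$ belong to $T_n(G)$ for all $a\in G$, $\bar b\in G^n$, $i\in\{1,\ldots,n\}$. A nonempty $H\subseteq G$ is: quasi-stable if $x\in H$ implies $x[x\ldots x]\in H$; $l$-unitary if $x[y\ldots y]\in H$ and $y\in H$ imply $x\in H$; a normal $v$-complex if for all $x,y\in G$ and $t\in T_n(G)$, $x,y\in H$ and $t(x)\in H$ imply $t(y)\in H$. *)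

From mathcomp Require Import all_boot.
Set Implicit Arguments. Unset Strict Implicit. Unset Printing Implicit Defensive.

Section Menger.
Variables (G : Type) (n : nat).
Variable o : G -> {ffun 'I_n -> G} -> G.      (* x[y_1 ... y_n] *)
Variable R : 'I_n -> G -> G.

(* \bar u |_i z : replace the i-th entry of u by z *)
Definition subst_at (u : {ffun 'I_n -> G}) (i : 'I_n) (z : G) : {ffun 'I_n -> G} :=
  [ffun j => if j == i then z else u j].

Definition Rtuple (y : G) : {ffun 'I_n -> G} := [ffun j => R j y].

Definition functional_menger : Prop :=
  (forall x (y z : {ffun 'I_n -> G}),
      o (o x y) z = o x [ffun j => o (y j) z]) /\
  (forall x, o x (Rtuple x) = x) /\
  (forall x u i z y,
      o (o x (subst_at u i z)) (Rtuple y) = o x (subst_at u i (o z (Rtuple y)))) /\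
  (forall i x y, R i (o x (Rtuple y)) = o (R i x) (Rtuple y)) /\
  (forall x y z,
      o (o x (Rtuple y)) (Rtuple z) = o (o x (Rtuple z)) (Rtuple y)) /\
  (forall i k x (y : {ffun 'I_n -> G}), R i (o x y) = R i (o (R k x) y)) /\
  (forall i x (y : {ffun 'I_n -> G}), o (R i x) y = o (y i) (Rtuple (o x y))).

Inductive Tn : (G -> G) -> Prop :=
  | Tn_id : Tn (fun x => x)
  | Tn_sub : forall t a (b : {ffun 'I_n -> G}) i,
      Tn t -> Tn (fun x => o a (subst_at b i (t x)))
  | Tn_R : forall t i, Tn t -> Tn (fun x => R i (t x)).

Definition quasi_stable (H : G -> Prop) : Prop :=
  forall x, H x -> H (o x [ffun => x]).

Definition l_unitary (H : G -> Prop) : Prop :=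
  forall x y, H (o x [ffun => y]) -> H y -> H x.

Definition normal_v_complex (H : G -> Prop) : Prop :=
  forall x y t, Tn t -> H x -> H y -> H (t x) -> H (t y).

End Menger.

Definition pfun (n : nat) (A : Type) := {ffun 'I_n -> A} -> option A.

Definition is_mcomp (n : nat) (A : Type) (f : pfun n A) (g : 'I_n -> pfun n A)
  (h : pfun n A) : Prop :=
  forall (a : {ffun 'I_n -> A}) (b : A),
    h a = Some b <->
    exists c : {ffun 'I_n -> A}, (forall j, g j a = Some (c j)) /\ f c = Some b.

Definition pR (n : nat) (A : Type) (i : 'I_n) (f : pfun n A) : pfun n A :=
  fun a => if f a is Some _ then Some (a i) else None.

Definition representation (G : Type) (n : nat) (o : G -> {ffun 'I_n -> G} -> G)
  (R : 'I_n -> G -> G) (A : Type) (P : G -> pfun n A) : Prop :=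
  (forall x (y : {ffun 'I_n -> G}), is_mcomp (P x) (fun j => P (y j)) (P (o x y))) /\
  (forall i x, P (R i x) = pR i (P x)).

Definition stabilizer (G : Type) (n : nat) (o : G -> {ffun 'I_n -> G} -> G)
  (R : 'I_n -> G -> G) (H : G -> Prop) : Prop :=
  (exists x, H x) /\
  exists (A : Type) (P : G -> pfun n A) (a : A),
    representation o R P /\
    forall g, H g <-> P g [ffun => a] = Some a.

From mathcomp Require Import all_boot.
From Stdlib Require Import ClassicalEpsilon PropExtensionality FunctionalExtensionality Classical.
Set Implicit Arguments. Unset Strict Implicit. Unset Printing Implicit Defensive.

(* If P represents the system and H is the stabilizer of a, everything is read
   off the values P g (a,...,a): H is where this value is a, U is where it is
   defined, and the value of x[y_1 ... y_n] depends only on those of the y_j.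
   Conversely, call x and y equivalent when t x \in H <-> t y \in H for all t
   in T_n(G).  This is a congruence, and g acts on equivalence classes by
   g([x_1],...,[x_n]) = [g[x_1 ... x_n]], defined exactly when
   g[x_1 ... x_n] \in U; H is the stabilizer of the class of any element of H.
   Since n > 0, U = {x | R_1 x \in H} is a union of classes, and the axioms
   show that g[x_1 ... x_n] \in U forces every x_j \in U, which is what makes
   the action a representation. *)

Lemma eq_option_Some (T : Type) (u v : option T) :
  (forall b, u = Some b <-> v = Some b) -> u = v.
Proof.
case: u => [b|] E; first by apply/esym/E.
by case: v E => // b /(_ b) [_ /(_ erefl)].
Qed.

Lemma ffun_subst_ind (G : Type) (n : nat) (Rel : G -> G -> Prop)
    (Q : {ffun 'I_n -> G} -> Prop) (xs ys : {ffun 'I_n -> G}) :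
  (forall (zs : {ffun 'I_n -> G}) j z,
     Rel (zs j) z -> Q zs -> Q (subst_at zs j z)) ->
  (forall j, Rel (xs j) (ys j)) -> Q xs -> Q ys.
Proof.
move=> Qsubst Rxy Qxs.
pose mix k := [ffun j : 'I_n => if (j < k)%N then ys j else xs j].
have Qmix k : (k <= n)%N -> Q (mix k).
  elim: k => [_|k IHk ltkn].
    by congr Q: Qxs; apply/ffunP => j; rewrite ffunE.
  have -> : mix k.+1 = subst_at (mix k) (Ordinal ltkn) (ys (Ordinal ltkn)).
    apply/ffunP => j; rewrite !ffunE ltnS leq_eqVlt.
    case: (j =P Ordinal ltkn) => [-> | /eqP]; first by rewrite eqxx.
    by rewrite -val_eqE /= => /negbTE ->.
  by apply: Qsubst; [rewrite ffunE ltnn | exact: IHk (ltnW ltkn)].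
by congr Q: (Qmix n (leqnn n)); apply/ffunP => j; rewrite ffunE ltn_ord.
Qed.

Lemma subst_at_id (G : Type) (n : nat) (zs : {ffun 'I_n -> G}) j :
  subst_at zs j (zs j) = zs.
Proof. by apply/ffunP => k; rewrite ffunE; case: eqP => [->|]. Qed.

Lemma Tn_comp (G : Type) (n : nat) (o : G -> {ffun 'I_n -> G} -> G)
    (R : 'I_n -> G -> G) (t s : G -> G) :
  Tn o R t -> Tn o R s -> Tn o R (fun x => t (s x)).
Proof. by move=> Tt Ts; elim: Tt => // *; [apply: Tn_sub | apply: Tn_R]. Qed.

Section Necessity.

Variables (G : Type) (n : nat) (o : G -> {ffun 'I_n -> G} -> G).
Variables (R : 'I_n -> G -> G) (A : Type) (P : G -> pfun n A) (a : A).
Hypothesis repP : representation o R P.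

Local Notation diag := [ffun => a].

Definition stab (g : G) : Prop := P g diag = Some a.
Definition diag_defined (g : G) : Prop := P g diag <> None.

Lemma diag_o_congr f (ys zs : {ffun 'I_n -> G}) :
  (forall j, P (ys j) diag = P (zs j) diag) -> P (o f ys) diag = P (o f zs) diag.
Proof.
move=> Eyz; apply: eq_option_Some => b; rewrite !(proj1 repP).
by split=> -[c [Pc Pf]]; exists c; split=> // j; rewrite -Pc Eyz.
Qed.

Lemma diag_o_stab f (ys : {ffun 'I_n -> G}) :
  (forall j, stab (ys j)) -> P (o f ys) diag = P f diag.
Proof.
move=> Sys; apply: eq_option_Some => b; rewrite (proj1 repP); split.
- move=> [c [Pc Pf]]; suff <- : c = diag by [].
  by apply/ffunP => j; rewrite ffunE; move: (Pc j); rewrite Sys => -[].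
- by move=> Pf; exists diag; split=> // j; rewrite Sys ffunE.
Qed.

Lemma diag_Tn t x y :
  Tn o R t -> P x diag = P y diag -> P (t x) diag = P (t y) diag.
Proof.
move=> Tt; elim: Tt => [//|t' b w i _ IH|t' i _ IH] Exy.
- by apply: diag_o_congr => j; rewrite !ffunE; case: (j == i); rewrite ?IH.
- by rewrite !(proj2 repP) /pR IH.
Qed.

Lemma stab_R i x : diag_defined x -> stab (R i x).
Proof.
rewrite /diag_defined /stab (proj2 repP) /pR.
by case: (P x diag) => [_ _ | /(_ erefl)] //; rewrite ffunE.
Qed.

Lemma diag_defined_R i x : diag_defined (R i x) -> diag_defined x.
Proof. by rewrite /diag_defined (proj2 repP) /pR; case: (P x diag). Qed.

Lemma diag_fixpoint x y :
  x = o y (Rtuple R x) -> diag_defined x -> P x diag = P y diag.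
Proof.
by move=> Exy Dx; rewrite {1}Exy diag_o_stab // => j; rewrite ffunE; apply: stab_R.
Qed.

Lemma diag_subst_fixpoint x y i u (w : {ffun 'I_n -> G}) :
  x = o y (Rtuple R x) -> diag_defined x ->
  P (o u (subst_at w i x)) diag = P (o u (subst_at w i y)) diag.
Proof.
move=> Exy Dx; apply: diag_o_congr => j; rewrite !ffunE.
by case: (j == i); rewrite ?(diag_fixpoint Exy).
Qed.

Lemma stab_quasi_stable : quasi_stable o stab.
Proof. by move=> x Sx; rewrite /stab diag_o_stab // => j; rewrite ffunE. Qed.

Lemma stab_l_unitary : l_unitary o stab.
Proof. by move=> x y + Sy; rewrite /stab diag_o_stab // => j; rewrite ffunE. Qed.

Lemma stab_normal_v_complex : normal_v_complex o R stab.
Proof. by move=> x y t Tt Sx Sy; rewrite /stab (diag_Tn Tt (etrans Sx (esym Sy))). Qed.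

Lemma diag_defined_Tn x y t :
  Tn o R t -> stab x -> stab y -> diag_defined (t x) -> diag_defined (t y).
Proof. by move=> Tt Sx Sy; rewrite /diag_defined (diag_Tn Tt (etrans Sx (esym Sy))). Qed.

End Necessity.

Section TnEquivalence.

Variables (G : Type) (n : nat) (o : G -> {ffun 'I_n -> G} -> G).
Variables (R : 'I_n -> G -> G) (H : G -> Prop).

Definition Tn_equiv (x y : G) : Prop := forall t, Tn o R t -> (H (t x) <-> H (t y)).

Definition Tn_class (x : G) : G -> Prop := Tn_equiv x.

Lemma Tn_equiv_refl x : Tn_equiv x x.
Proof. by []. Qed.

Lemma Tn_equiv_sym x y : Tn_equiv x y -> Tn_equiv y x.
Proof. by move=> Exy t Tt; apply: iff_sym (Exy t Tt). Qed.

Lemma Tn_equiv_trans x y z : Tn_equiv x y -> Tn_equiv y z -> Tn_equiv x z.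
Proof. by move=> Exy Eyz t Tt; apply: iff_trans (Exy t Tt) (Eyz t Tt). Qed.

Lemma Tn_classP x y : Tn_class x = Tn_class y <-> Tn_equiv x y.
Proof.
split=> [Cxy | Exy]; first by rewrite -[Tn_equiv x y]/(Tn_class x y) Cxy.
apply: functional_extensionality => z; apply: propositional_extensionality.
by split; apply: Tn_equiv_trans; last exact: Exy; apply: Tn_equiv_sym.
Qed.

Lemma Tn_equiv_Tn s x y : Tn o R s -> Tn_equiv x y -> Tn_equiv (s x) (s y).
Proof. by move=> Ts Exy t Tt; apply: (Exy (fun z => t (s z))); apply: Tn_comp. Qed.

Lemma Tn_equiv_o g (xs ys : {ffun 'I_n -> G}) :
  (forall j, Tn_equiv (xs j) (ys j)) -> Tn_equiv (o g xs) (o g ys).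
Proof.
move=> Exy; pose Q zs := Tn_equiv (o g xs) (o g zs).
apply: (ffun_subst_ind (Q := Q) _ Exy (Tn_equiv_refl _)) => zs j z Ez Exz.
apply: Tn_equiv_trans Exz _; rewrite -{1}(subst_at_id zs j).
exact: (Tn_equiv_Tn (Tn_sub g zs j (Tn_id o R)) Ez).
Qed.

End TnEquivalence.

Section ClassRepresentation.

Variables (G : Type) (n : nat) (o : G -> {ffun 'I_n -> G} -> G).
Variables (R : 'I_n -> G -> G) (H U : G -> Prop).

Local Notation cls := (Tn_class o R H).

Definition class_rep (g : G) : pfun n (G -> Prop) := fun al =>
  match excluded_middle_informative
    (exists xs : {ffun 'I_n -> G}, (forall j, al j = cls (xs j)) /\ U (o g xs)) with
  | left ex => Some (cls (o g (proj1_sig (constructive_indefinite_description _ ex))))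
  | right _ => None
  end.

Lemma class_rep_Some_cls g al b :
  class_rep g al = Some b -> exists xs : {ffun 'I_n -> G}, forall j, al j = cls (xs j).
Proof.
rewrite /class_rep; case: excluded_middle_informative => // ex _.
by case: ex => xs [Exs _]; exists xs.
Qed.

Hypothesis U_saturated : forall x y, Tn_equiv o R H x y -> U x -> U y.

Lemma class_repP g (al : {ffun 'I_n -> G -> Prop}) (xs : {ffun 'I_n -> G}) b :
  (forall j, al j = cls (xs j)) ->
  class_rep g al = Some b <-> U (o g xs) /\ b = cls (o g xs).
Proof.
move=> Exs; rewrite /class_rep.
case: excluded_middle_informative => [ex | nex]; last first.
  by split=> // -[Ug _]; case: nex; exists xs.
case: constructive_indefinite_description => ys [Eys Uy] /=.
have Eyx : Tn_equiv o R H (o g ys) (o g xs).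
  by apply: Tn_equiv_o => j; apply/Tn_classP; rewrite -Eys Exs.
have -> : cls (o g ys) = cls (o g xs) by apply/Tn_classP.
by split=> [[<-] | [_ ->]]; split=> //; apply: U_saturated Eyx Uy.
Qed.

End ClassRepresentation.

Section Sufficiency.

Variables (G : Type) (n : nat) (o : G -> {ffun 'I_n -> G} -> G).
Variables (R : 'I_n -> G -> G) (H U : G -> Prop) (i0 : 'I_n).

Hypothesis A1 : forall x (y z : {ffun 'I_n -> G}),
  o (o x y) z = o x [ffun j => o (y j) z].
Hypothesis A2 : forall x, o x (Rtuple R x) = x.
Hypothesis A3 : forall x u i z y,
  o (o x (subst_at u i z)) (Rtuple R y) = o x (subst_at u i (o z (Rtuple R y))).
Hypothesis A4 : forall i x y, R i (o x (Rtuple R y)) = o (R i x) (Rtuple R y).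
Hypothesis A6 : forall i k x (y : {ffun 'I_n -> G}), R i (o x y) = R i (o (R k x) y).
Hypothesis A7 : forall i x (y : {ffun 'I_n -> G}), o (R i x) y = o (y i) (Rtuple R (o x y)).

Hypothesis H_lu : l_unitary o H.
Hypothesis H_nv : normal_v_complex o R H.
Hypothesis H_U : forall x, H x -> U x.
Hypothesis U_R : forall i x, U x -> H (R i x).
Hypothesis notU_R : forall i x, ~ U x -> ~ U (R i x).

Local Notation equiv := (Tn_equiv o R H).
Local Notation cls := (Tn_class o R H).
Local Notation P := (class_rep o R H U).

Lemma U_iff_H_R x : U x <-> H (R i0 x).
Proof.
split=> [/U_R // | HRx]; apply: NNPP => nUx.
exact: notU_R nUx (H_U HRx).
Qed.

Lemma U_saturated x y : equiv x y -> U x -> U y.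
Proof. by move=> Exy; rewrite !U_iff_H_R; apply: (proj1 (Exy _ (Tn_R i0 (Tn_id o R)))). Qed.

Lemma H_equiv x y : H x -> H y -> equiv x y.
Proof. by move=> Hx Hy t Tt; split; apply: H_nv. Qed.

(* Elements of H are pairwise equivalent, so r can be traded for a constant
   tuple (to use l-unitarity) or, when z \in H, for Rtuple R z (to use A2). *)
Lemma H_o_H z (r : {ffun 'I_n -> G}) : (forall k, H (r k)) -> H (o z r) <-> H z.
Proof.
move=> Hr; split=> [Hzr | Hz].
- apply: (H_lu (y := r i0)) => //.
  have Er : equiv (o z r) (o z [ffun => r i0]).
    by apply: Tn_equiv_o => j; rewrite ffunE; apply: H_equiv.
  exact: (proj1 (Er _ (Tn_id o R)) Hzr).
- have Er : equiv (o z (Rtuple R z)) (o z r).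
    by apply: Tn_equiv_o => j; rewrite ffunE; apply: H_equiv; [apply/U_R/H_U|].
  by apply: (proj1 (Er _ (Tn_id o R))); rewrite A2.
Qed.

Lemma Tn_o_Rtuple t w x :
  Tn o R t -> t (o w (Rtuple R x)) = o (t w) (Rtuple R x).
Proof. by move=> Tt; elim: Tt w => [//|t' b v i _ IH|t' i _ IH] w; rewrite IH ?A3 ?A4. Qed.

Lemma equiv_o_Rtuple w x : U x -> equiv (o w (Rtuple R x)) w.
Proof.
by move=> Ux t Tt; rewrite Tn_o_Rtuple // H_o_H // => k; rewrite ffunE; apply: U_R.
Qed.

Lemma U_o_arg f (ys : {ffun 'I_n -> G}) j : U (o f ys) -> U (ys j).
Proof.
move=> /U_R HR; rewrite U_iff_H_R.
by move: (HR i0); rewrite (A6 i0 j) A7 A4 H_o_H // => k; rewrite ffunE.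
Qed.

Lemma U_o_R i x (xs : {ffun 'I_n -> G}) : U (o (R i x) xs) <-> U (o x xs).
Proof. by rewrite !U_iff_H_R -A6. Qed.

Local Notation class_repUP := (class_repP U_saturated).

Lemma class_rep_mcomp x (y : {ffun 'I_n -> G}) :
  is_mcomp (P x) (fun j => P (y j)) (P (o x y)).
Proof.
move=> al b; split=> [Pxy | [c [Pyc Pxc]]].
- have [xs Exs] := class_rep_Some_cls Pxy.
  move: Pxy; rewrite (class_repUP _ _ Exs) A1.
  set ys := [ffun j => o (y j) xs] => -[Uys ->].
  have Eys j : [ffun j => cls (ys j)] j = cls (ys j) by rewrite ffunE.
  exists [ffun j => cls (ys j)]; split; last exact/(class_repUP _ _ Eys).
  move=> j; rewrite ffunE; apply/(class_repUP _ _ Exs).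
  by have := U_o_arg j Uys; rewrite /ys ffunE.
- have [xs Exs] := class_rep_Some_cls (Pyc i0).
  set ys := [ffun j => o (y j) xs].
  have Ec j : c j = cls (ys j).
    by have /(class_repUP _ _ Exs) [_ ->] := Pyc j; rewrite ffunE.
  by move: Pxc; rewrite (class_repUP _ _ Ec) (class_repUP _ _ Exs) A1.
Qed.

Lemma class_rep_R i x : P (R i x) = pR i (P x).
Proof.
apply: functional_extensionality => al; rewrite /pR.
case Px: (P x al) => [b|]; last first.
  case PRx: (P (R i x) al) => [b|] //; have [xs Exs] := class_rep_Some_cls PRx.
  move: PRx; rewrite (class_repUP _ _ Exs) U_o_R => -[Ux _].
  have : P x al = Some (cls (o x xs)) by apply/(class_repUP _ _ Exs).
  by rewrite Px.
have [xs Exs] := class_rep_Some_cls Px.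
move: Px; rewrite (class_repUP _ _ Exs) => -[Ux _].
apply/(class_repUP _ _ Exs); rewrite U_o_R Exs; split=> //.
by apply/Tn_classP/Tn_equiv_sym; rewrite A7; apply: equiv_o_Rtuple.
Qed.

Lemma stab_class_rep h g : H h -> H g <-> P g [ffun => cls h] = Some (cls h).
Proof.
move=> Hh; have Eh (j : 'I_n) : [ffun => cls h] j = cls ([ffun => h] j).
  by rewrite !ffunE.
have Hhs (k : 'I_n) : H ([ffun => h] k) by rewrite ffunE.
rewrite (class_repUP _ _ Eh) Tn_classP; split=> [Hg | [_ Ehg]].
- by split; [apply/H_U/H_o_H | apply: H_equiv; rewrite ?H_o_H].
- by rewrite -(H_o_H g Hhs); apply: (proj1 (Ehg _ (Tn_id o R))).
Qed.

Lemma stabilizer_of_conditions : (exists x, H x) -> stabilizer o R H.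
Proof.
move=> [h Hh]; split; first by exists h.
exists (G -> Prop), P, (cls h); split; last by move=> g; apply: stab_class_rep.
by split; [apply: class_rep_mcomp | apply: class_rep_R].
Qed.

End Sufficiency.

Theorem theorem1 (G : Type) (n : nat) (o : G -> {ffun 'I_n -> G} -> G)
  (R : 'I_n -> G -> G) (H : G -> Prop) :
  (0 < n)%N ->
  functional_menger o R ->
  (exists x, H x) ->
  (stabilizer o R H <->
   (quasi_stable o H /\ l_unitary o H /\ normal_v_complex o R H /\
    exists U : G -> Prop,
      (forall x, H x -> U x) /\
      (forall i x, U x -> H (R i x)) /\
      (forall i x, ~ U x -> ~ U (R i x)) /\
      (forall x y t, Tn o R t -> H x -> H y -> U (t x) -> U (t y)) /\
      (forall x y i u (w : {ffun 'I_n -> G}),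
         x = o y (Rtuple R x) -> U x ->
         H (o u (subst_at w i y)) -> H (o u (subst_at w i x))) /\
      (forall x y, x = o y (Rtuple R x) -> U x -> H y -> H x) /\
      (forall x y i u (w : {ffun 'I_n -> G}),
         x = o y (Rtuple R x) -> U x ->
         U (o u (subst_at w i y)) -> U (o u (subst_at w i x))) /\
      (forall x y, x = o y (Rtuple R x) -> U x -> U y -> U x))).
Proof.
move=> n_gt0 [A1 [A2 [A3 [A4 [_ [A6 A7]]]]]] H_ne; split.
- case=> _ [A [P [a [repP HP]]]].
  have -> : H = stab P a.
    by apply: functional_extensionality => g; apply/propositional_extensionality/HP.
  split; first exact: stab_quasi_stable repP.
  split; first exact: stab_l_unitary repP.
  split; first exact: stab_normal_v_complex repP.
  exists (diag_defined P a); do !split.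
  + by move=> x Sx; rewrite /diag_defined Sx.
  + exact: stab_R repP.
  + by move=> i x Ux /(diag_defined_R repP).
  + exact: diag_defined_Tn repP.
  + by move=> x y i u w Exy Dx; rewrite /stab (diag_subst_fixpoint repP i u w Exy Dx).
  + by move=> x y Exy Dx; rewrite /stab (diag_fixpoint repP Exy Dx).
  + by move=> x y i u w Exy Dx; rewrite /diag_defined (diag_subst_fixpoint repP i u w Exy Dx).
  + by [].
-
  case=> _ [H_lu [H_nv [U [H_U [U_R [notU_R _]]]]]].
  exact: (stabilizer_of_conditions (Ordinal n_gt0) A1 A2 A3 A4 A6 A7
            H_lu H_nv H_U U_R notU_R H_ne).
Qed.
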